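(* Let $0<q<1$, $n\in\mathbb{N}_0$, and let $x,y,r,f,g,v,w,u$ be complex parameters with $y\neq0$. Then \begin{align*} &\sum_{k=0}^{n}\frac{(q^{-n},x;q)_k\,q^k}{(q,y;q)_k}\;{}_3\Phi_2\left[\begin{matrix}r,f,g;\\ v,w;\end{matrix}\;q;\,uq^k\right]\\ &\qquad=\frac{x^n\left(\frac{y}{x};q\right)_n}{(y;q)_n}\sum_{k,j\geqq0}\frac{(r,f,g;q)_{k+j}}{(q;q)_j\,(v,w;q)_{k+j}}\,\frac{\left(\frac{q^{1-n}}{y},\frac{qx}{y};q\right)_k}{\left(\frac{xq^{1-n}}{y},q;q\right)_k}\,u^{k+j}\left(\frac{q}{y}\right)^j. \end{align*}
   Context: Throughout $0<q<1$. For complex $\alpha$: $(\alpha;q)_0=1$, $(\alpha;q)_n=\prod_{k=0}^{n-1}(1-\alpha q^k)$, and $(\alpha_1,\dots,\alpha_m;q)_n=(\alpha_1;q)_n\cdots(\alpha_m;q)_n$. The basic hypergeometric series is ${}_{3}\Phi_{2}\left[\begin{matrix}a_1,a_2,a_3;\\ b_1,b_2;\end{matrix}\,q;z\right]=\sum_{n=0}^\infty\frac{(a_1,a_2,a_3;q)_n}{(b_1,b_2;q)_n}\frac{z^n}{(q;q)_n}$. *)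

From Stdlib Require Import Reals.
From Coquelicot Require Import Coquelicot.
Open Scope C_scope.

Fixpoint qpoch (a q : C) (n : nat) : C :=
  match n with
  | O => RtoC 1
  | S m => qpoch a q m * (RtoC 1 - a * Cpow q m)
  end.

(* sum of a complex series, computed componentwise with Coquelicot's Series
   (meaningful when the series converges) *)
Definition csum (a : nat -> C) : C :=
  (Series (fun n => fst (a n)), Series (fun n => snd (a n))).

Definition phi32_term (a1 a2 a3 b1 b2 q z : C) (n : nat) : C :=
  qpoch a1 q n * qpoch a2 q n * qpoch a3 q n
  / (qpoch b1 q n * qpoch b2 q n) * Cpow z n / qpoch q q n.

Definition phi32 (a1 a2 a3 b1 b2 q z : C) : C :=
  csum (phi32_term a1 a2 a3 b1 b2 q z).

Fixpoint csum_fin (a : nat -> C) (n : nat) : C :=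
  match n with
  | O => a O
  | S m => csum_fin a m + a (S m)
  end.

From Stdlib Require Import Reals Lia Lra.
From Coquelicot Require Import Coquelicot.
Open Scope C_scope.

(* Expanding each 3Phi2 and exchanging the finite sum over k with the series, the m-th
   coefficient of the left side is (r,f,g;q)_m/(v,w;q)_m u^m/(q;q)_m times the power moment
   sum_k T_k q^(km) of the q-Chu-Vandermonde weights T_k = (q^-n,x;q)_k q^k/(q,y;q)_k.
   The q-Newton formula writes q^(km) in the basis (q^k - w)(q^k - wq)...(q^k - wq^(i-1)),
   w = q/y; against this basis the moments of T are balanced products, by induction on i
   through a contiguity relation in x, starting from the q-Chu-Vandermonde sum.  The
   result is the diagonal (Cauchy) arrangement of the double series on the right, which
   converges geometrically and may therefore be summed by rows. *)

Lemma csum_fin_sum_n (u : nat -> C) n : csum_fin u n = sum_n u n.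
Proof.
  induction n as [|n IH]; simpl.
  - now rewrite sum_O.
  - now rewrite IH, sum_Sn.
Qed.

Lemma csum_fin_ext (u v : nat -> C) n :
  (forall k, (k <= n)%nat -> u k = v k) -> csum_fin u n = csum_fin v n.
Proof. rewrite !csum_fin_sum_n. exact (sum_n_ext_loc u v n). Qed.

Lemma csum_fin_plus (u v : nat -> C) n :
  csum_fin (fun k => u k + v k) n = csum_fin u n + csum_fin v n.
Proof. rewrite !csum_fin_sum_n. exact (sum_n_plus u v n). Qed.

Lemma csum_fin_minus (u v : nat -> C) n :
  csum_fin (fun k => u k - v k) n = csum_fin u n - csum_fin v n.
Proof. induction n as [|n IH]; simpl; [ring|]. rewrite IH. ring. Qed.

Lemma csum_fin_mult_l (c : C) (u : nat -> C) n :
  csum_fin (fun k => c * u k) n = c * csum_fin u n.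
Proof. rewrite !csum_fin_sum_n. exact (sum_n_mult_l c u n). Qed.

Lemma csum_fin_switch (u : nat -> nat -> C) m n :
  csum_fin (fun i => csum_fin (u i) n) m = csum_fin (fun j => csum_fin (fun i => u i j) m) n.
Proof.
  rewrite csum_fin_sum_n, (sum_n_ext _ (fun i => sum_n (u i) n)) by (intros; apply csum_fin_sum_n).
  rewrite sum_n_switch, csum_fin_sum_n. apply sum_n_ext. intros; now rewrite csum_fin_sum_n.
Qed.

Lemma csum_fin_succ_l (u : nat -> C) n : csum_fin u (S n) = u O + csum_fin (fun k => u (S k)) n.
Proof.
  induction n as [|n IH]; [reflexivity|].
  change (csum_fin u (S (S n))) with (csum_fin u (S n) + u (S (S n))).
  rewrite IH. simpl. ring.
Qed.

Lemma qpoch_S (a Q : C) k : qpoch a Q (S k) = qpoch a Q k * (1 - a * Cpow Q k).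
Proof. reflexivity. Qed.

Lemma qpoch_S_shift (a Q : C) k : qpoch a Q (S k) = (1 - a) * qpoch (a * Q) Q k.
Proof.
  induction k as [|k IH]; [simpl; ring|].
  rewrite qpoch_S, IH, qpoch_S. simpl. ring.
Qed.

Lemma qpoch_neq0_le (a Q : C) m j : qpoch a Q m <> 0 -> (j <= m)%nat -> qpoch a Q j <> 0.
Proof.
  intros Hm Hj. induction Hj as [|m Hj IH]; auto.
  apply IH. intros E. apply Hm. rewrite qpoch_S, E. ring.
Qed.

Lemma qpoch_S_neq0_factor (a Q : C) m : qpoch a Q (S m) <> 0 -> 1 - a * Cpow Q m <> 0.
Proof. rewrite qpoch_S. intros H E. apply H. rewrite E. ring. Qed.

Lemma qpoch_S_neq0_head (a Q : C) m : qpoch a Q (S m) <> 0 -> 1 - a <> 0.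
Proof. rewrite qpoch_S_shift. intros H E. apply H. rewrite E. ring. Qed.

Lemma qpoch_S_neq0_shift (a Q : C) m : qpoch a Q (S m) <> 0 -> qpoch (a * Q) Q m <> 0.
Proof. rewrite qpoch_S_shift. intros H E. apply H. rewrite E. ring. Qed.

Lemma qpoch_inv_pow_eq0 (Q : C) n d : Q <> 0 -> qpoch (/ Cpow Q n) Q (S n + d) = 0.
Proof.
  intros HQ. induction d as [|d IH].
  - rewrite Nat.add_0_r, qpoch_S, Cinv_l. ring. apply Cpow_nz; auto.
  - replace (S n + S d)%nat with (S (S n + d)) by lia. rewrite qpoch_S, IH. ring.
Qed.

(* Homogeneous q-shifted factorial: it equals [z^n (w/z; Q)_n] but needs no [z <> 0]. *)
Fixpoint hom_qpoch (z w Q : C) (n : nat) : C :=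
  match n with
  | O => 1
  | S m => hom_qpoch z w Q m * (z - w * Cpow Q m)
  end.

Lemma hom_qpoch_qpoch (z w Q : C) n : z <> 0 -> hom_qpoch z w Q n = Cpow z n * qpoch (w / z) Q n.
Proof.
  intros Hz. induction n as [|n IH]; simpl; [ring|].
  rewrite IH. field. exact Hz.
Qed.

Lemma hom_qpoch_scale (z w Q : C) n : hom_qpoch (z * Q) (w * Q) Q n = Cpow Q n * hom_qpoch z w Q n.
Proof. induction n as [|n IH]; simpl; [ring|]. rewrite IH. ring. Qed.

Lemma hom_qpoch_S_shift (z w Q : C) n :
  hom_qpoch (z * Q) w Q (S n) = (z * Q - w) * Cpow Q n * hom_qpoch z w Q n.
Proof.
  induction n as [|n IH]; [simpl; ring|].
  change (hom_qpoch (z * Q) w Q (S (S n)))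
    with (hom_qpoch (z * Q) w Q (S n) * (z * Q - w * Cpow Q (S n))).
  rewrite IH. simpl. ring.
Qed.

(** * The q-Chu-Vandermonde sum and its moments *)

Section QChuVandermonde.

Variable Q : C.
Hypothesis HQ : Q <> 0.
Hypothesis HQQ : forall j, qpoch Q Q j <> 0.

Definition chu_term (n : nat) (x y : C) (k : nat) : C :=
  qpoch (/ Cpow Q n) Q k * qpoch x Q k * Cpow Q k / (qpoch Q Q k * qpoch y Q k).

Definition chu_value (n : nat) (x y : C) : C := hom_qpoch x y Q n / qpoch y Q n.

Lemma chu_term_0 n x y : chu_term n x y 0 = 1.
Proof. unfold chu_term. simpl. field. Qed.

Lemma chu_term_terminates n x y : chu_term n x y (S n) = 0.
Proof.
  unfold chu_term. rewrite <- (Nat.add_0_r (S n)), qpoch_inv_pow_eq0 by exact HQ.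
  unfold Cdiv. ring.
Qed.

Lemma chu_term_S n x y k : qpoch y Q (S k) <> 0 ->
  chu_term (S n) x y (S k)
  = chu_term n x y (S k) - / Cpow Q n * (1 - x) / (1 - y) * chu_term n (x * Q) (y * Q) k.
Proof.
  intros Hy.
  assert (Hy1 := qpoch_S_neq0_head _ _ _ Hy).
  assert (HyQ := qpoch_S_neq0_shift _ _ _ Hy).
  assert (HQk := qpoch_S_neq0_factor _ _ _ (HQQ (S k))).
  assert (HQn : Cpow Q n <> 0) by (apply Cpow_nz; exact HQ).
  unfold chu_term.
  rewrite (qpoch_S_shift (/ Cpow Q (S n))).
  replace (/ Cpow Q (S n) * Q) with (/ Cpow Q n) by (simpl; field; auto).
  rewrite (qpoch_S (/ Cpow Q n)), (qpoch_S_shift x), (qpoch_S_shift y), (qpoch_S Q Q k).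
  simpl Cpow. field; repeat split; auto.
Qed.

Lemma chu_value_S n x y : qpoch y Q (S n) <> 0 ->
  chu_value n x y - / Cpow Q n * (1 - x) / (1 - y) * chu_value n (x * Q) (y * Q)
  = chu_value (S n) x y.
Proof.
  intros Hy.
  assert (Hy1 := qpoch_S_neq0_head _ _ _ Hy).
  assert (HyQ := qpoch_S_neq0_shift _ _ _ Hy).
  assert (Hyn := qpoch_S_neq0_factor _ _ _ Hy).
  assert (Hy' := qpoch_neq0_le _ _ _ n Hy (Nat.le_succ_diag_r n)).
  assert (HQn : Cpow Q n <> 0) by (apply Cpow_nz; exact HQ).
  unfold chu_value. rewrite hom_qpoch_scale.
  replace (qpoch (y * Q) Q n) with (qpoch y Q (S n) / (1 - y))
    by (rewrite qpoch_S_shift; field; exact Hy1).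
  rewrite qpoch_S. simpl hom_qpoch. field; repeat split; auto.
Qed.

Theorem q_chu_vandermonde n : forall x y,
  qpoch y Q n <> 0 -> csum_fin (chu_term n x y) n = chu_value n x y.
Proof.
  induction n as [|n IH]; intros x y Hy.
  - unfold chu_term, chu_value. simpl. field.
  - set (c := / Cpow Q n * (1 - x) / (1 - y)).
    assert (Hy' := qpoch_neq0_le _ _ _ n Hy (Nat.le_succ_diag_r n)).
    assert (Hshift : csum_fin (fun k => chu_term n x y (S k)) n = chu_value n x y - 1).
    { rewrite <- (IH x y Hy'), <- (chu_term_0 n x y).
      transitivity (csum_fin (chu_term n x y) (S n) - chu_term n x y 0).
      - rewrite csum_fin_succ_l. ring.
      - cbn [csum_fin]. rewrite chu_term_terminates. ring. }
    rewrite csum_fin_succ_l, chu_term_0.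
    rewrite (csum_fin_ext _ (fun k => chu_term n x y (S k) + (- c) * chu_term n (x * Q) (y * Q) k)).
    2: { intros k Hk. rewrite chu_term_S. unfold c. ring.
         apply (qpoch_neq0_le _ _ (S n)); [exact Hy | lia]. }
    rewrite csum_fin_plus, csum_fin_mult_l, Hshift, IH by (apply qpoch_S_neq0_shift; exact Hy).
    rewrite <- chu_value_S by exact Hy. unfold c. ring.
Qed.

End QChuVandermonde.

Section ChuMoments.

Variable Q : C.
Hypothesis HQ : Q <> 0.
Hypothesis HQQ : forall j, qpoch Q Q j <> 0.

Variables (n : nat) (y : C).
Hypothesis Hy : y <> 0.
Hypothesis Hyn : qpoch y Q n <> 0.

Definition chu_moment (x : C) (i : nat) : C :=
  csum_fin (fun k => chu_term Q n x y k * hom_qpoch (Cpow Q k) (Q / y) Q i) n.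

Lemma chu_term_mul_pow (x : C) k : x <> 0 ->
  chu_term Q n x y k * Cpow Q k = (chu_term Q n x y k - (1 - x) * chu_term Q n (x * Q) y k) / x.
Proof.
  intros Hx. unfold chu_term, Cdiv. set (D := / (qpoch Q Q k * qpoch y Q k)).
  assert (Hs : (1 - x) * qpoch (x * Q) Q k = qpoch x Q k * (1 - x * Cpow Q k))
    by (rewrite <- qpoch_S_shift; reflexivity).
  transitivity ((qpoch (/ Cpow Q n) Q k * qpoch x Q k * Cpow Q k * D
    - qpoch (/ Cpow Q n) Q k * ((1 - x) * qpoch (x * Q) Q k) * Cpow Q k * D) * / x).
  - rewrite Hs. field. exact Hx.
  - ring.
Qed.

Lemma chu_moment_S (x : C) i : x <> 0 ->
  chu_moment x (S i)
  = (chu_moment x i - (1 - x) * chu_moment (x * Q) i) / x - Q / y * Cpow Q i * chu_moment x i.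
Proof.
  intros Hx. unfold chu_moment.
  rewrite (csum_fin_ext _ (fun k =>
      / x * (chu_term Q n x y k * hom_qpoch (Cpow Q k) (Q / y) Q i)
    + (- (/ x * (1 - x))) * (chu_term Q n (x * Q) y k * hom_qpoch (Cpow Q k) (Q / y) Q i)
    + (- (Q / y * Cpow Q i)) * (chu_term Q n x y k * hom_qpoch (Cpow Q k) (Q / y) Q i))).
  - rewrite !csum_fin_plus, !csum_fin_mult_l. field; repeat split; auto.
  - intros k _. simpl hom_qpoch.
    transitivity ((chu_term Q n x y k * Cpow Q k) * hom_qpoch (Cpow Q k) (Q / y) Q i
      - Q / y * Cpow Q i * (chu_term Q n x y k * hom_qpoch (Cpow Q k) (Q / y) Q i)); [ring|].
    rewrite chu_term_mul_pow by exact Hx. field; repeat split; auto.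
Qed.

Lemma chu_value_shift_x (x : C) :
  chu_value Q n (x * Q) y * (1 - x * (Q / Cpow Q n) / y) = chu_value Q n x y * (1 - Q * x / y).
Proof.
  assert (HQn : Cpow Q n <> 0) by (apply Cpow_nz; exact HQ).
  pose proof (hom_qpoch_S_shift x y Q n) as Hs. simpl hom_qpoch at 1 in Hs.
  unfold chu_value.
  transitivity (- (hom_qpoch (x * Q) y Q n * (x * Q - y * Cpow Q n)) / (qpoch y Q n * y * Cpow Q n)).
  - field; repeat split; auto.
  - rewrite Hs. field; repeat split; auto.
Qed.

Theorem chu_moment_value i : forall x : C, x <> 0 ->
  (forall j, qpoch (x * (Q / Cpow Q n) / y) Q j <> 0) ->
  chu_moment x i
  = chu_value Q n x y * qpoch (Q / Cpow Q n / y) Q i * qpoch (Q * x / y) Q i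
    / qpoch (x * (Q / Cpow Q n) / y) Q i.
Proof.
  assert (HQn : Cpow Q n <> 0) by (apply Cpow_nz; exact HQ).
  induction i as [|i IH]; intros x Hx Hc.
  - unfold chu_moment. simpl.
    rewrite (csum_fin_ext _ (chu_term Q n x y)) by (intros; ring).
    rewrite q_chu_vandermonde by auto. field.
  - assert (HxQ : x * Q <> 0) by (apply Cmult_neq_0; auto).
    set (a := Q / Cpow Q n / y). set (b := Q * x / y). set (c := x * (Q / Cpow Q n) / y).
    assert (HbQ : Q * (x * Q) / y = b * Q) by (unfold b; field; exact Hy).
    assert (HcQ : x * Q * (Q / Cpow Q n) / y = c * Q) by (unfold c; field; split; auto).
    assert (Hc1 : 1 - c <> 0) by exact (qpoch_S_neq0_head _ _ _ (Hc 1%nat)).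
    assert (Hci : 1 - c * Cpow Q i <> 0) by exact (qpoch_S_neq0_factor _ _ _ (Hc (S i))).
    assert (HcQ' : forall j, qpoch (x * Q * (Q / Cpow Q n) / y) Q j <> 0)
      by (intros j; rewrite HcQ; apply qpoch_S_neq0_shift, Hc).
    assert (Hshift : chu_moment (x * Q) i
                     = chu_value Q n x y * qpoch a Q i * qpoch b Q (S i) / qpoch c Q (S i)).
    { rewrite IH, HbQ, HcQ by assumption.
      assert (Hv := chu_value_shift_x x). fold c b in Hv.
      replace (chu_value Q n (x * Q) y) with (chu_value Q n x y * (1 - b) / (1 - c))
        by (rewrite <- Hv; field; exact Hc1).
      rewrite !qpoch_S_shift. fold a. field.
      split; [apply qpoch_S_neq0_shift, Hc | exact Hc1]. }
    rewrite chu_moment_S, Hshift, IH by auto.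
    assert (Hci' : Cpow Q n * y - x * Q * Cpow Q i <> 0).
    { intros E. apply Hci. unfold c.
      replace (1 - x * (Q / Cpow Q n) / y * Cpow Q i)
        with ((Cpow Q n * y - x * Q * Cpow Q i) / (Cpow Q n * y)) by (field; split; auto).
      rewrite E. unfold Cdiv. ring. }
    rewrite !qpoch_S. unfold a, b, c in *. field. repeat split; auto.
Qed.

End ChuMoments.

Fixpoint qbinom (Q : C) (m i : nat) : C :=
  match m, i with
  | _, O => 1
  | O, S _ => 0
  | S m', S i' => qbinom Q m' i' + Cpow Q (S i') * qbinom Q m' (S i')
  end.

Lemma qbinom_0_r (Q : C) m : qbinom Q m 0 = 1.
Proof. destruct m; reflexivity. Qed.

Lemma qbinom_gt (Q : C) m i : (m < i)%nat -> qbinom Q m i = 0.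
Proof.
  revert i. induction m as [|m IH]; intros [|i] Hi; try lia; simpl; [reflexivity|].
  rewrite !IH by lia. ring.
Qed.

Lemma qbinom_diag (Q : C) m : qbinom Q m m = 1.
Proof. induction m as [|m IH]; simpl; [reflexivity|]. rewrite IH, qbinom_gt by lia. ring. Qed.

Lemma qbinom_qpoch (Q : C) m : forall i j, (i + j = m)%nat ->
  qbinom Q m i * qpoch Q Q i * qpoch Q Q j = qpoch Q Q m.
Proof.
  induction m as [|m IH]; intros [|i] [|j] Hij; try lia; simpl qbinom.
  - simpl. ring.
  - replace j with m by lia. simpl. ring.
  - replace i with m by lia. rewrite qbinom_diag, qbinom_gt by lia. simpl. ring.
  - transitivity (qbinom Q m i * qpoch Q Q i * qpoch Q Q (S j) * (1 - Q * Cpow Q i)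
      + Cpow Q (S i) * (qbinom Q m (S i) * qpoch Q Q (S i) * qpoch Q Q j) * (1 - Q * Cpow Q j)).
    { rewrite (qpoch_S Q Q j), (qpoch_S Q Q i). simpl Cpow. ring. }
    rewrite (IH i (S j)), (IH (S i) j) by lia.
    rewrite qpoch_S. replace m with (i + S j)%nat by lia.
    rewrite Cpow_add_r. simpl Cpow. ring.
Qed.

Theorem q_newton (Q z w : C) m :
  Cpow z m = csum_fin (fun i => qbinom Q m i * Cpow w (m - i) * hom_qpoch z w Q i) m.
Proof.
  induction m as [|m IH]; [simpl; ring|].
  set (X := fun i => qbinom Q m i * Cpow Q i * Cpow w (S m - i) * hom_qpoch z w Q i).
  assert (HX : csum_fin X m = Cpow w (S m) + csum_fin (fun i => X (S i)) m).
  { transitivity (csum_fin X (S m)).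
    - cbn [csum_fin]. unfold X. rewrite (qbinom_gt Q m (S m)) by lia. ring.
    - rewrite csum_fin_succ_l. unfold X at 1. rewrite qbinom_0_r, Nat.sub_0_r. simpl. ring. }
  change (Cpow z (S m)) with (z * Cpow z m).
  rewrite IH, <- csum_fin_mult_l.
  rewrite (csum_fin_ext _ (fun i => qbinom Q m i * Cpow w (m - i) * hom_qpoch z w Q (S i) + X i)).
  2: { intros i Hi. unfold X. rewrite Nat.sub_succ_l by exact Hi. simpl. ring. }
  rewrite csum_fin_plus, HX, csum_fin_succ_l.
  rewrite (csum_fin_ext (fun i => qbinom Q (S m) (S i) * _ * _)
             (fun i => qbinom Q m i * Cpow w (m - i) * hom_qpoch z w Q (S i) + X (S i))).
  2: { intros i _. unfold X. simpl. ring. }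
  rewrite csum_fin_plus, qbinom_0_r, Nat.sub_0_r. simpl. ring.
Qed.

Definition balanced_coef (Q : C) (n : nat) (x y : C) (i : nat) : C :=
  qpoch ((Q / Cpow Q n) / y) Q i * qpoch (Q * x / y) Q i
  / (qpoch (x * (Q / Cpow Q n) / y) Q i * qpoch Q Q i).

Theorem chu_power_sum (Q : C) n (x y : C) m :
  Q <> 0 -> (forall j, qpoch Q Q j <> 0) -> x <> 0 -> y <> 0 -> qpoch y Q n <> 0 ->
  (forall j, qpoch (x * (Q / Cpow Q n) / y) Q j <> 0) ->
  csum_fin (fun k => chu_term Q n x y k * Cpow (Cpow Q k) m) n / qpoch Q Q m
  = chu_value Q n x y
    * csum_fin (fun i => balanced_coef Q n x y i * (Cpow (Q / y) (m - i) / qpoch Q Q (m - i))) m.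
Proof.
  intros HQ HQQ Hx Hy Hyn Hc.
  rewrite (csum_fin_ext _ (fun k => csum_fin (fun i => chu_term Q n x y k
      * (qbinom Q m i * Cpow (Q / y) (m - i) * hom_qpoch (Cpow Q k) (Q / y) Q i)) m)).
  2: { intros k _. rewrite (q_newton Q (Cpow Q k) (Q / y) m), csum_fin_mult_l. reflexivity. }
  rewrite csum_fin_switch.
  rewrite (csum_fin_ext _ (fun i => qbinom Q m i * Cpow (Q / y) (m - i) * chu_moment Q n y x i)).
  2: { intros i _. unfold chu_moment. rewrite <- csum_fin_mult_l.
       apply csum_fin_ext. intros; ring. }
  unfold Cdiv at 1. rewrite Cmult_comm, <- !csum_fin_mult_l.
  apply csum_fin_ext. intros i Hi.
  rewrite chu_moment_value by auto.
  pose proof (qbinom_qpoch Q m i (m - i) ltac:(lia)) as Hb.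
  assert (HQi := HQQ i). assert (HQmi := HQQ (m - i)%nat). assert (Hci := Hc i).
  replace (qbinom Q m i) with (qpoch Q Q m / (qpoch Q Q i * qpoch Q Q (m - i)))
    by (rewrite <- Hb; field; split; auto).
  unfold balanced_coef. field. repeat split; auto.
Qed.

(** * Geometric growth *)

Definition growth_le (a : nat -> C) (L : R) : Prop :=
  forall r, (L < r)%R -> exists M, forall m, (Cmod (a m) <= M * r ^ m)%R.

Lemma growth_le_ext (a b : nat -> C) L : (forall m, a m = b m) -> growth_le a L -> growth_le b L.
Proof.
  intros Hab Ha r Hr. destruct (Ha r Hr) as [M HM].
  exists M. intros m. rewrite <- Hab. apply HM.
Qed.

Lemma growth_le_pow (z : C) : growth_le (Cpow z) (Cmod z).
Proof.
  intros r Hr. exists 1%R. intros m. rewrite Cmod_pow, Rmult_1_l.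
  apply pow_incr. split; [apply Cmod_ge_0 | lra].
Qed.

Lemma exists_gt_mult_lt (a b c : R) : (0 <= a)%R -> (a * b < c)%R ->
  exists b', (b < b')%R /\ (a * b' < c)%R.
Proof.
  intros Ha Habc. exists (b + (c - a * b) / (a + 1))%R.
  assert (Hd : (0 < (c - a * b) / (a + 1))%R) by (apply Rdiv_lt_0_compat; lra).
  split; [lra|].
  replace (a * (b + (c - a * b) / (a + 1)))%R with (c - (c - a * b) / (a + 1))%R
    by (field; lra).
  lra.
Qed.

Lemma geometric_bound_nonneg (a : nat -> C) M r :
  (forall m, Cmod (a m) <= M * r ^ m)%R -> (0 <= M)%R.
Proof. intros H. specialize (H O). pose proof (Cmod_ge_0 (a O)). simpl in H. lra. Qed.

Lemma growth_le_mult (a b : nat -> C) L1 L2 : (0 <= L1)%R -> (0 <= L2)%R ->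
  growth_le a L1 -> growth_le b L2 -> growth_le (fun m => a m * b m) (L1 * L2).
Proof.
  intros H1 H2 Ha Hb r Hr.
  destruct (exists_gt_mult_lt L2 L1 r H2 ltac:(lra)) as [r1 [Hr1 Hr1']].
  destruct (exists_gt_mult_lt r1 L2 r ltac:(lra) ltac:(lra)) as [r2 [Hr2 Hr2']].
  destruct (Ha r1 Hr1) as [M1 HM1]. destruct (Hb r2 Hr2) as [M2 HM2].
  pose proof (geometric_bound_nonneg _ _ _ HM1). pose proof (geometric_bound_nonneg _ _ _ HM2).
  exists (M1 * M2)%R. intros m. rewrite Cmod_mult.
  apply Rle_trans with ((M1 * r1 ^ m) * (M2 * r2 ^ m))%R.
  - apply Rmult_le_compat; auto using Cmod_ge_0.
  - replace ((M1 * r1 ^ m) * (M2 * r2 ^ m))%R with (M1 * M2 * (r1 * r2) ^ m)%R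
      by (rewrite Rpow_mult_distr; ring).
    apply Rmult_le_compat_l; [nra|]. apply pow_incr. split; nra.
Qed.

Lemma bounded_prefix (b : nat -> R) K : exists M, forall i, (i <= K)%nat -> (b i <= M)%R.
Proof.
  induction K as [|K [M HM]].
  - exists (b O). intros i Hi. replace i with O by lia. lra.
  - exists (Rmax M (b (S K))). intros i Hi.
    destruct (Nat.eq_dec i (S K)) as [->|Hne]; [apply Rmax_r|].
    eapply Rle_trans; [apply HM; lia | apply Rmax_l].
Qed.

Lemma growth_le_of_ratio (a : nat -> C) L : (0 <= L)%R ->
  (forall r, (L < r)%R ->
     exists K, forall m, (K <= m)%nat -> (Cmod (a (S m)) <= r * Cmod (a m))%R) ->
  growth_le a L.
Proof.
  intros HL Hratio r Hr. destruct (Hratio r Hr) as [K HK].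
  destruct (bounded_prefix (fun i => Cmod (a i) / r ^ i)%R K) as [M HM].
  exists M.
  assert (Hpre : forall i, (i <= K)%nat -> (Cmod (a i) <= M * r ^ i)%R).
  { intros i Hi. apply Rle_div_l; [apply pow_lt; lra | apply HM, Hi]. }
  intros m. destruct (Nat.le_gt_cases m K) as [Hm|Hm]; [auto|].
  replace m with (K + (m - K))%nat by lia.
  induction (m - K)%nat as [|d IH].
  - rewrite Nat.add_0_r. auto.
  - rewrite Nat.add_succ_r. eapply Rle_trans; [apply HK; lia|].
    simpl. pose proof (pow_lt r (K + d) ltac:(lra)). nra.
Qed.

Lemma eventually_Cmod_mult_pow_lt (c : C) (q eps : R) : (0 < q < 1)%R -> (0 < eps)%R ->
  exists K, forall m, (K <= m)%nat -> (Cmod (c * Cpow (RtoC q) m) < eps)%R.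
Proof.
  intros Hq He. pose proof (Cmod_ge_0 c).
  destruct (pow_lt_1_zero q ltac:(rewrite Rabs_pos_eq; lra) (eps / (Cmod c + 1))) as [K HK].
  { apply Rdiv_lt_0_compat; lra. }
  exists K. intros m Hm. specialize (HK m Hm).
  assert (Hqm : (0 <= q ^ m)%R) by (apply pow_le; lra).
  rewrite Rabs_pos_eq in HK by exact Hqm.
  rewrite Cmod_mult, Cmod_pow, Cmod_R, Rabs_pos_eq by lra.
  apply (Rmult_lt_compat_l (Cmod c + 1)) in HK; [|lra].
  replace ((Cmod c + 1) * (eps / (Cmod c + 1)))%R with eps in HK by (field; lra).
  nra.
Qed.

Lemma growth_le_qpoch (c : C) (q : R) : (0 < q < 1)%R -> growth_le (qpoch c (RtoC q)) 1.
Proof.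
  intros Hq. apply growth_le_of_ratio; [lra|]. intros r Hr.
  destruct (eventually_Cmod_mult_pow_lt c q (r - 1) Hq) as [K HK]; [lra|].
  exists K. intros m Hm. specialize (HK m Hm).
  rewrite qpoch_S, Cmod_mult, Rmult_comm.
  apply Rmult_le_compat_r; [apply Cmod_ge_0|].
  unfold Cminus. eapply Rle_trans; [apply Cmod_triangle|]. rewrite Cmod_opp, Cmod_1. lra.
Qed.

Lemma growth_le_qpoch_inv (c : C) (q : R) : (0 < q < 1)%R ->
  (forall m, qpoch c (RtoC q) m <> 0) -> growth_le (fun m => / qpoch c (RtoC q) m) 1.
Proof.
  intros Hq Hc. apply growth_le_of_ratio; [lra|]. intros r Hr.
  destruct (eventually_Cmod_mult_pow_lt c q (1 - / r) Hq) as [K HK].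
  { assert (/ r < 1)%R by (rewrite <- Rinv_1; apply Rinv_lt_contravar; lra). lra. }
  exists K. intros m Hm. specialize (HK m Hm).
  assert (Hf := qpoch_S_neq0_factor _ _ _ (Hc (S m))).
  rewrite qpoch_S.
  replace (/ (qpoch c (RtoC q) m * (1 - c * Cpow (RtoC q) m)))
    with (/ (1 - c * Cpow (RtoC q) m) * / qpoch c (RtoC q) m) by (field; split; auto).
  rewrite Cmod_mult. apply Rmult_le_compat_r; [apply Cmod_ge_0|].
  rewrite Cmod_inv by exact Hf. rewrite <- (Rinv_inv r).
  apply Rinv_le_contravar; [apply Rinv_0_lt_compat; lra|].
  assert (T : (Cmod 1 <= Cmod (1 - c * Cpow (RtoC q) m) + Cmod (c * Cpow (RtoC q) m))%R).
  { replace (RtoC 1) with ((1 - c * Cpow (RtoC q) m) + c * Cpow (RtoC q) m) at 1 by ring.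
    apply Cmod_triangle. }
  rewrite Cmod_1 in T. lra.
Qed.

Lemma is_series_fst (a : nat -> C) l : is_series a l -> is_series (fun k => fst (a k)) (fst l).
Proof.
  intros H. apply (filterlim_ext (fun n => fst (sum_n a n))).
  - intros n. induction n as [|n IH]; [now rewrite !sum_O|]. now rewrite !sum_Sn, <- IH.
  - eapply filterlim_comp; [exact H|]. intros P [eps HP]. exists eps. intros z Hz. apply HP, Hz.
Qed.

Lemma is_series_snd (a : nat -> C) l : is_series a l -> is_series (fun k => snd (a k)) (snd l).
Proof.
  intros H. apply (filterlim_ext (fun n => snd (sum_n a n))).
  - intros n. induction n as [|n IH]; [now rewrite !sum_O|]. now rewrite !sum_Sn, <- IH.
  - eapply filterlim_comp; [exact H|]. intros P [eps HP]. exists eps. intros z Hz. apply HP, Hz.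
Qed.

Lemma csum_unique (a : nat -> C) l : is_series a l -> csum a = l.
Proof.
  intros H. unfold csum.
  rewrite (is_series_unique _ _ (is_series_fst a l H)), (is_series_unique _ _ (is_series_snd a l H)).
  now destruct l.
Qed.

Lemma csum_correct (a : nat -> C) : ex_series a -> is_series a (csum a).
Proof. intros [l Hl]. now rewrite (csum_unique a l Hl). Qed.

Lemma is_series_csum_fin (a : nat -> nat -> C) (l : nat -> C) n :
  (forall k, (k <= n)%nat -> is_series (a k) (l k)) ->
  is_series (fun m => csum_fin (fun k => a k m) n) (csum_fin l n).
Proof.
  induction n as [|n IH]; intros Ha; simpl; [apply Ha; lia|].
  apply (is_series_plus (fun m => csum_fin (fun k => a k m) n) (a (S n))); [apply IH; auto|].
  apply Ha. lia.
Qed.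

Lemma Cmod_csum_fin_le (u : nat -> C) n :
  (Cmod (csum_fin u n) <= sum_f_R0 (fun k => Cmod (u k)) n)%R.
Proof.
  induction n as [|n IH]; simpl; [lra|].
  eapply Rle_trans; [apply Cmod_triangle | lra].
Qed.

Lemma Cmod_series_le (a : nat -> C) (b : nat -> R) la lb :
  is_series a la -> is_series b lb -> (forall n, Cmod (a n) <= b n)%R -> (Cmod la <= lb)%R.
Proof.
  intros Ha Hb Hab.
  enough (H : Rbar_le (Cmod la) lb) by (simpl in H; exact H).
  apply (filterlim_le (F := eventually) (fun n => Cmod (sum_n a n)) (sum_n b)).
  - exists O. intros n _. rewrite <- csum_fin_sum_n, sum_n_Reals.
    eapply Rle_trans; [apply Cmod_csum_fin_le | apply sum_Rle; auto].
  - apply (filterlim_comp _ _ _ (sum_n a) (@norm C_AbsRing C_NormedModule) _ (locally la));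
      [exact Ha | exact (@filterlim_norm C_AbsRing C_NormedModule la)].
  - exact Hb.
Qed.

Lemma is_series_geom_scal (B β : R) : (0 <= β < 1)%R ->
  is_series (fun j => B * β ^ j)%R (B / (1 - β))%R.
Proof.
  intros Hb. apply (is_series_scal_l B (fun j => β ^ j)%R (/ (1 - β))%R).
  apply is_series_geom. rewrite Rabs_pos_eq; lra.
Qed.

Lemma ex_series_of_growth (a : nat -> C) L : (0 <= L < 1)%R -> growth_le a L -> ex_series a.
Proof.
  intros HL Ha. destruct (Ha ((L + 1) / 2)%R ltac:(lra)) as [M HM].
  apply (ex_series_le a (fun m => M * ((L + 1) / 2) ^ m)%R).
  - exact HM.
  - eexists. apply is_series_geom_scal. lra.
Qed.

Lemma Cmod_series_tail_le (u : nat -> C) (l : C) (B β : R) p : (0 <= β < 1)%R ->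
  is_series u l -> (forall j, Cmod (u j) <= B * β ^ j)%R ->
  (Cmod (l - csum_fin u p) <= B * β ^ S p / (1 - β))%R.
Proof.
  intros Hb Hu Hbound.
  assert (Htail : is_series (fun j => u (S p + j)%nat) (l - csum_fin u p)).
  { apply is_series_incr_n; [lia|]. simpl. rewrite <- csum_fin_sum_n.
    match goal with |- is_series _ ?l' => replace l' with l; [exact Hu|] end.
    change (l = l - csum_fin u p + csum_fin u p). ring. }
  apply (Cmod_series_le _ (fun j => B * β ^ S p * β ^ j)%R _ _ Htail).
  - apply is_series_geom_scal, Hb.
  - intros j. rewrite Rmult_assoc, <- pow_add. apply Hbound.
Qed.

Lemma csum_fin_triangle (a : nat -> nat -> C) N :
  csum_fin (fun m => csum_fin (fun k => a k (m - k)%nat) m) N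
  = csum_fin (fun k => csum_fin (a k) (N - k)) N.
Proof.
  induction N as [|N IH]; [reflexivity|].
  cbn [csum_fin]. rewrite IH.
  rewrite (csum_fin_ext (fun k => csum_fin (a k) (S N - k))
             (fun k => csum_fin (a k) (N - k) + a k (S N - k)%nat)).
  - rewrite csum_fin_plus, Nat.sub_diag. simpl. ring.
  - intros k Hk. rewrite Nat.sub_succ_l by exact Hk. reflexivity.
Qed.

Section DiagonalSummation.

Variable a : nat -> nat -> C.
Variables M α β : R.
Hypothesis Hα : (0 <= α < 1)%R.
Hypothesis Hβ : (0 <= β < 1)%R.
Hypothesis Ha : forall k j, (Cmod (a k j) <= M * α ^ k * β ^ j)%R.

Definition geom_conv (m : nat) : R := sum_f_R0 (fun k => α ^ k * β ^ (m - k))%R m.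

Lemma ex_series_geom_conv : ex_series geom_conv.
Proof.
  assert (Hgeom : forall γ, (0 <= γ < 1)%R ->
            is_series (fun k => γ ^ k)%R (/ (1 - γ))%R /\ ex_series (fun k => Rabs (γ ^ k))).
  { intros γ Hγ. split.
    - apply is_series_geom. rewrite Rabs_pos_eq; lra.
    - apply (ex_series_ext (fun k => γ ^ k)%R).
      + intros k. symmetry. apply Rabs_pos_eq, pow_le. lra.
      + apply ex_series_geom. rewrite Rabs_pos_eq; lra. }
  destruct (Hgeom α Hα) as [Hα1 Hα2]. destruct (Hgeom β Hβ) as [Hβ1 Hβ2].
  eexists. exact (is_series_mult _ _ _ _ Hα1 Hβ1 Hα2 Hβ2).
Qed.

Lemma is_series_row k : is_series (a k) (csum (a k)).
Proof.
  apply csum_correct, (ex_series_le (a k) (fun j => M * α ^ k * β ^ j)%R); [exact (Ha k)|].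
  eexists. apply is_series_geom_scal, Hβ.
Qed.

Lemma Cmod_diagonal_le m : (Cmod (csum_fin (fun k => a k (m - k)%nat) m) <= M * geom_conv m)%R.
Proof.
  eapply Rle_trans; [apply Cmod_csum_fin_le|]. unfold geom_conv. rewrite scal_sum.
  apply sum_Rle. intros k _. specialize (Ha k (m - k)%nat). lra.
Qed.

(* Summing the rows first instead of the diagonals only adds the tails
   [sum_(j > N - k) a k j], which are dominated by the convolution [geom_conv N]. *)
Lemma Cmod_diagonal_defect_le N :
  (Cmod (csum_fin (fun k => csum (a k)) N
         - csum_fin (fun m => csum_fin (fun k => a k (m - k)%nat) m) N)
   <= M / (1 - β) * geom_conv N)%R.
Proof.
  rewrite csum_fin_triangle, <- csum_fin_minus.
  eapply Rle_trans; [apply Cmod_csum_fin_le|]. unfold geom_conv. rewrite scal_sum.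
  apply sum_Rle. intros k _.
  eapply Rle_trans; [apply (Cmod_series_tail_le (a k) _ (M * α ^ k) β); auto using is_series_row|].
  assert (HM : (0 <= M)%R) by (specialize (Ha O O); pose proof (Cmod_ge_0 (a O O)); simpl in Ha; lra).
  assert (Hx : (0 <= M * α ^ k * β ^ (N - k) / (1 - β))%R).
  { apply Rdiv_le_0_compat; [|lra]. repeat apply Rmult_le_pos; auto; apply pow_le; lra. }
  replace (M * α ^ k * β ^ S (N - k) / (1 - β))%R
    with (β * (M * α ^ k * β ^ (N - k) / (1 - β)))%R by (simpl; field; lra).
  replace (α ^ k * β ^ (N - k) * (M / (1 - β)))%R
    with (M * α ^ k * β ^ (N - k) / (1 - β))%R by (field; lra).
  nra.
Qed.

Theorem is_series_diagonal :
  is_series (fun m => csum_fin (fun k => a k (m - k)%nat) m) (csum (fun k => csum (a k))).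
Proof.
  set (D := fun m => csum_fin (fun k => a k (m - k)%nat) m).
  destruct (ex_series_le D (fun m => M * geom_conv m)%R) as [L HL].
  { exact Cmod_diagonal_le. }
  { exact (ex_series_scal_l M geom_conv ex_series_geom_conv). }
  assert (Hdefect : is_series (fun k => csum (a k) - D k) (RtoC 0)).
  { apply (filterlim_norm_zero (sum_n (fun k => csum (a k) - D k))).
    enough (H : is_lim_seq (fun N => norm (sum_n (fun k => csum (a k) - D k) N)) 0) by exact H.
    apply (is_lim_seq_le_le (fun _ => 0%R) _ (fun N => M / (1 - β) * geom_conv N)%R).
    - intros N. split; [apply norm_ge_0|].
      change (Cmod (sum_n (fun k => (csum (a k) - D k)%C) N) <= M / (1 - β) * geom_conv N)%R.
      rewrite <- csum_fin_sum_n, csum_fin_minus. apply Cmod_diagonal_defect_le.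
    - apply is_lim_seq_const.
    - replace (Finite 0) with (Rbar_mult (M / (1 - β))%R 0) by (simpl; f_equal; ring).
      apply is_lim_seq_scal_l, ex_series_lim_0, ex_series_geom_conv. }
  assert (Hrows : is_series (fun k => csum (a k)) L).
  { assert (H := is_series_plus _ _ _ _ Hdefect HL).
    match type of H with is_series _ ?l => replace l with L in H by exact (eq_sym (Cplus_0_l L)) end.
    eapply is_series_ext; [|exact H]. intros k.
    change (@eq C (csum (a k) - D k + D k) (csum (a k))). ring. }
  rewrite (csum_unique _ _ Hrows). exact HL.
Qed.

End DiagonalSummation.

Lemma growth_le_diagonal_bound (e b c : nat -> C) L1 L2 L3 :
  (0 <= L1)%R -> (0 <= L2)%R -> (0 <= L3)%R -> (L1 * L2 < 1)%R -> (L1 * L3 < 1)%R ->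
  growth_le e L1 -> growth_le b L2 -> growth_le c L3 ->
  exists M α β, (0 <= α < 1)%R /\ (0 <= β < 1)%R /\
    forall k j, (Cmod (e (k + j)%nat * b k * c j) <= M * α ^ k * β ^ j)%R.
Proof.
  intros H1 H2 H3 H12 H13 He Hb Hc.
  destruct (exists_gt_mult_lt (Rmax L2 L3) L1 1) as [r1 [Hr1 Hr1']].
  { apply Rmax_case; lra. }
  { unfold Rmax. destruct (Rle_dec L2 L3); nra. }
  assert (Hr12 : (r1 * L2 < 1)%R) by (pose proof (Rmax_l L2 L3); nra).
  assert (Hr13 : (r1 * L3 < 1)%R) by (pose proof (Rmax_r L2 L3); nra).
  destruct (exists_gt_mult_lt r1 L2 1 ltac:(lra) Hr12) as [r2 [Hr2 Hr2']].
  destruct (exists_gt_mult_lt r1 L3 1 ltac:(lra) Hr13) as [r3 [Hr3 Hr3']].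
  destruct (He r1 Hr1) as [M1 HM1]. destruct (Hb r2 Hr2) as [M2 HM2].
  destruct (Hc r3 Hr3) as [M3 HM3].
  pose proof (geometric_bound_nonneg _ _ _ HM1). pose proof (geometric_bound_nonneg _ _ _ HM2).
  exists (M1 * M2 * M3)%R, (r1 * r2)%R, (r1 * r3)%R.
  split; [split; nra|]. split; [split; nra|].
  intros k j. rewrite !Cmod_mult.
  apply Rle_trans with ((M1 * r1 ^ (k + j)) * (M2 * r2 ^ k) * (M3 * r3 ^ j))%R.
  - repeat apply Rmult_le_compat; auto using Cmod_ge_0, Rmult_le_pos.
  - right. rewrite pow_add, !Rpow_mult_distr. ring.
Qed.

Lemma qpoch_qq_neq0 (q : R) : (0 < q < 1)%R -> forall k, qpoch (RtoC q) (RtoC q) k <> 0.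
Proof.
  intros Hq k. induction k as [|k IH]; simpl.
  - intros E. apply (f_equal fst) in E. simpl in E. lra.
  - apply Cmult_neq_0; [exact IH|].
    change (RtoC q * Cpow (RtoC q) k) with (Cpow (RtoC q) (S k)). rewrite <- RtoC_pow.
    intros E. apply (f_equal fst) in E. simpl in E.
    assert (q ^ S k < 1)%R by (apply pow_lt_1_compat; [lra | lia]).
    simpl in *. lra.
Qed.

Definition phi32_coef (a1 a2 a3 b1 b2 q : C) (m : nat) : C :=
  qpoch a1 q m * qpoch a2 q m * qpoch a3 q m / (qpoch b1 q m * qpoch b2 q m).

Lemma growth_le_phi32_coef (a1 a2 a3 b1 b2 : C) (q : R) : (0 < q < 1)%R ->
  (forall m, qpoch b1 (RtoC q) m <> 0) -> (forall m, qpoch b2 (RtoC q) m <> 0) ->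
  growth_le (phi32_coef a1 a2 a3 b1 b2 (RtoC q)) 1.
Proof.
  intros Hq Hb1 Hb2.
  apply (growth_le_ext (fun m => qpoch a1 (RtoC q) m * qpoch a2 (RtoC q) m * qpoch a3 (RtoC q) m
                                 * / qpoch b1 (RtoC q) m * / qpoch b2 (RtoC q) m)).
  { intros m. unfold phi32_coef. field. split; auto. }
  replace 1%R with (1 * 1 * 1 * 1 * 1)%R by ring.
  repeat apply growth_le_mult; try lra; auto using growth_le_qpoch, growth_le_qpoch_inv.
Qed.

Lemma is_series_phi32 (a1 a2 a3 b1 b2 z : C) (q : R) : (0 < q < 1)%R ->
  (forall m, qpoch b1 (RtoC q) m <> 0) -> (forall m, qpoch b2 (RtoC q) m <> 0) ->
  (Cmod z < 1)%R ->
  is_series (phi32_term a1 a2 a3 b1 b2 (RtoC q) z) (phi32 a1 a2 a3 b1 b2 (RtoC q) z).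
Proof.
  intros Hq Hb1 Hb2 Hz. apply csum_correct.
  apply (ex_series_of_growth _ (1 * Cmod z * 1)%R); [pose proof (Cmod_ge_0 z); lra|].
  apply growth_le_mult; [pose proof (Cmod_ge_0 z); lra | lra | |].
  - apply growth_le_mult; [lra | apply Cmod_ge_0 | | apply growth_le_pow].
    apply growth_le_phi32_coef; auto.
  - apply growth_le_qpoch_inv; [exact Hq | apply qpoch_qq_neq0, Hq].
Qed.

(** * The double series *)

Definition double_term (Q : C) (n : nat) (x y r f g v w u : C) (k j : nat) : C :=
  qpoch r Q (k + j) * qpoch f Q (k + j) * qpoch g Q (k + j)
  / (qpoch Q Q j * qpoch v Q (k + j) * qpoch w Q (k + j))
  * (qpoch ((Q / Cpow Q n) / y) Q k * qpoch (Q * x / y) Q k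
     / (qpoch (x * (Q / Cpow Q n) / y) Q k * qpoch Q Q k))
  * Cpow u (k + j) * Cpow (Q / y) j.

Section DoubleTerm.

Variables (Q : C) (n : nat) (x y r f g v w u : C).
Hypothesis HQQ : forall j, qpoch Q Q j <> 0.
Hypothesis Hv : forall m, qpoch v Q m <> 0.
Hypothesis Hw : forall m, qpoch w Q m <> 0.
Hypothesis Hc : forall m, qpoch (x * (Q / Cpow Q n) / y) Q m <> 0.

Lemma double_term_factor k j :
  double_term Q n x y r f g v w u k j
  = phi32_coef r f g v w Q (k + j) * Cpow u (k + j) * balanced_coef Q n x y k
    * (Cpow (Q / y) j / qpoch Q Q j).
Proof.
  unfold double_term, phi32_coef, balanced_coef.
  field. repeat split; auto.
Qed.

Lemma chu_phi32_term_sum m : Q <> 0 -> x <> 0 -> y <> 0 -> qpoch y Q n <> 0 ->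
  csum_fin (fun k => chu_term Q n x y k * phi32_term r f g v w Q (u * Cpow Q k) m) n
  = chu_value Q n x y * csum_fin (fun k => double_term Q n x y r f g v w u k (m - k)%nat) m.
Proof.
  intros HQ Hx Hy Hyn.
  set (e := phi32_coef r f g v w Q m * Cpow u m).
  rewrite (csum_fin_ext _ (fun k => e / qpoch Q Q m * (chu_term Q n x y k * Cpow (Cpow Q k) m))).
  2: { intros k _. unfold e, phi32_term, phi32_coef. rewrite Cpow_mult_l.
       field. repeat split; auto. }
  rewrite csum_fin_mult_l.
  transitivity (e * (csum_fin (fun k => chu_term Q n x y k * Cpow (Cpow Q k) m) n / qpoch Q Q m)).
  { field. auto. }
  rewrite chu_power_sum by auto.
  transitivity (chu_value Q n x y * csum_fin (fun i =>
    e * (balanced_coef Q n x y i * (Cpow (Q / y) (m - i) / qpoch Q Q (m - i)))) m).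
  { rewrite csum_fin_mult_l. ring. }
  f_equal.
  apply csum_fin_ext. intros k Hk.
  rewrite double_term_factor, (Nat.add_comm k), Nat.sub_add by exact Hk.
  unfold e. ring.
Qed.

End DoubleTerm.

Lemma double_term_geometric_bound (q : R) (n : nat) (x y r f g v w u : C) :
  (0 < q < 1)%R ->
  (forall m, qpoch v (RtoC q) m <> 0) -> (forall m, qpoch w (RtoC q) m <> 0) ->
  (forall m, qpoch (x * (RtoC q / Cpow (RtoC q) n) / y) (RtoC q) m <> 0) ->
  (Cmod u < 1)%R -> (Cmod (u * RtoC q / y) < 1)%R ->
  exists M α β, (0 <= α < 1)%R /\ (0 <= β < 1)%R /\
    forall k j, (Cmod (double_term (RtoC q) n x y r f g v w u k j) <= M * α ^ k * β ^ j)%R.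
Proof.
  intros Hq Hv Hw Hc Hu Huy.
  pose proof (qpoch_qq_neq0 q Hq) as HQQ.
  destruct (growth_le_diagonal_bound
              (fun m => phi32_coef r f g v w (RtoC q) m * Cpow u m)
              (balanced_coef (RtoC q) n x y)
              (fun j => Cpow (RtoC q / y) j / qpoch (RtoC q) (RtoC q) j)
              (Cmod u) 1 (Cmod (RtoC q / y)))
    as (M & α & β & Hα & Hβ & Hbound); try apply Cmod_ge_0; try lra.
  - rewrite <- Cmod_mult. replace (u * (RtoC q / y)) with (u * RtoC q / y)
      by (unfold Cdiv; ring). exact Huy.
  - replace (Cmod u) with (1 * Cmod u)%R by ring.
    apply growth_le_mult; [lra | apply Cmod_ge_0 | | apply growth_le_pow].
    apply growth_le_phi32_coef; auto.
  - apply (growth_le_ext (fun k =>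
        qpoch (RtoC q / Cpow (RtoC q) n / y) (RtoC q) k * qpoch (RtoC q * x / y) (RtoC q) k
        * / qpoch (x * (RtoC q / Cpow (RtoC q) n) / y) (RtoC q) k * / qpoch (RtoC q) (RtoC q) k)).
    { intros k. unfold balanced_coef. field. split; auto. }
    replace 1%R with (1 * 1 * 1 * 1)%R by ring.
    repeat apply growth_le_mult; try lra; auto using growth_le_qpoch, growth_le_qpoch_inv.
  - replace (Cmod (RtoC q / y)) with (Cmod (RtoC q / y) * 1)%R by ring.
    apply growth_le_mult; [apply Cmod_ge_0 | lra | apply growth_le_pow |].
    apply growth_le_qpoch_inv; auto.
  - exists M, α, β. split; [exact Hα|]. split; [exact Hβ|].
    intros k j. rewrite double_term_factor by auto. exact (Hbound k j).
Qed.

Theorem theorem4 (q : R) (n : nat) (x y r f g v w u : C) :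
  (0 < q < 1)%R ->
  y <> RtoC 0 ->
  x <> RtoC 0 ->
  qpoch y (RtoC q) n <> RtoC 0 ->
  (forall m, qpoch v (RtoC q) m <> RtoC 0) ->
  (forall m, qpoch w (RtoC q) m <> RtoC 0) ->
  (forall m, qpoch (x * (RtoC q / Cpow (RtoC q) n) / y) (RtoC q) m <> RtoC 0) ->
  (Cmod u < 1)%R ->
  (Cmod (u * RtoC q / y) < 1)%R ->
  csum_fin (fun k =>
      qpoch (/ Cpow (RtoC q) n) (RtoC q) k * qpoch x (RtoC q) k * Cpow (RtoC q) k
      / (qpoch (RtoC q) (RtoC q) k * qpoch y (RtoC q) k)
      * phi32 r f g v w (RtoC q) (u * Cpow (RtoC q) k)) n
  =
  Cpow x n * qpoch (y / x) (RtoC q) n / qpoch y (RtoC q) n *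
  csum (fun k => csum (fun j =>
      qpoch r (RtoC q) (k + j) * qpoch f (RtoC q) (k + j) * qpoch g (RtoC q) (k + j)
      / (qpoch (RtoC q) (RtoC q) j * qpoch v (RtoC q) (k + j) * qpoch w (RtoC q) (k + j))
      * (qpoch ((RtoC q / Cpow (RtoC q) n) / y) (RtoC q) k
         * qpoch (RtoC q * x / y) (RtoC q) k
         / (qpoch (x * (RtoC q / Cpow (RtoC q) n) / y) (RtoC q) k
            * qpoch (RtoC q) (RtoC q) k))
      * Cpow u (k + j) * Cpow (RtoC q / y) j)).
Proof.
  intros Hq Hy Hx Hyn Hv Hw Hc Hu Huy.
  pose proof (qpoch_qq_neq0 q Hq) as HQQ.
  assert (HQ : RtoC q <> 0) by (intros E; apply (f_equal fst) in E; simpl in E; lra).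
  destruct (double_term_geometric_bound q n x y r f g v w u) as (M & α & β & Hα & Hβ & Hbound);
    auto.
  assert (Hlhs : is_series
    (fun m => chu_value (RtoC q) n x y
              * csum_fin (fun k => double_term (RtoC q) n x y r f g v w u k (m - k)%nat) m)
    (csum_fin (fun k => chu_term (RtoC q) n x y k
                        * phi32 r f g v w (RtoC q) (u * Cpow (RtoC q) k)) n)).
  { eapply is_series_ext; [intros m; apply chu_phi32_term_sum; auto|].
    apply (is_series_csum_fin (fun k m =>
      chu_term (RtoC q) n x y k * phi32_term r f g v w (RtoC q) (u * Cpow (RtoC q) k) m)).
    intros k _. apply (@is_series_scal_l C_AbsRing C_NormedModule (chu_term (RtoC q) n x y k)).
    apply is_series_phi32; auto.
    rewrite Cmod_mult, Cmod_pow, Cmod_R, Rabs_pos_eq by lra.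
    assert (q ^ k <= 1)%R by (rewrite <- (pow1 k); apply pow_incr; lra).
    pose proof (pow_le q k ltac:(lra)). pose proof (Cmod_ge_0 u). nra. }
  replace (Cpow x n * qpoch (y / x) (RtoC q) n / qpoch y (RtoC q) n)
    with (chu_value (RtoC q) n x y)
    by (unfold chu_value; rewrite hom_qpoch_qpoch by exact Hx; reflexivity).
  exact (filterlim_locally_unique _ _ _ Hlhs
           (is_series_scal_l _ _ _ (is_series_diagonal _ M α β Hα Hβ Hbound))).
Qed.
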